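(* Let $q_1,q_2,q_3,q_4$ satisfy $q_1q_2q_3q_4=1$, let $x$ be a variable, let $a\in\{1,2,3,4\}$, and let $\pi$ be a finite solid partition all of whose elements have $a$-th coordinate equal to $1$. Put $$\mathbf R=\sum_{(i_1,i_2,i_3,i_4)\in\pi}x\,q_1^{i_1-1}q_2^{i_2-1}q_3^{i_3-1}q_4^{i_4-1},$$ and define $$\mathcal Z^{\mathrm{D8}}_{\underline 4;4}[\pi,K]=\mathbb I\big[-(1-K^{-1})x^{-1}\mathbf R+\mathbf P_{123}^\vee\mathbf R^\vee\mathbf R\big],\qquad \widetilde{\mathcal Z}^{\mathrm{D6}}_{\bar a}[\pi]=\mathbb I\big[-\mathbf P_a^\vee x^{-1}\mathbf R+\mathbf P_{\bar a}^\vee\mathbf R^\vee\mathbf R\big].$$ Then, specializing $K=q_a$, $$(-1)^{\sigma_4(\pi)}\,\mathcal Z^{\mathrm{D8}}_{\underline 4;4}[\pi,q_a]=\widetilde{\mathcal Z}^{\mathrm{D6}}_{\bar a}[\pi],\qquad \sigma_4(\pi)=\#\{(i,i,i,j)\in\pi:i<j\}.$$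
   Context: A finite solid partition is a finite set $\pi\subset\mathbb Z_{\ge1}^4$ such that if $(i_1,\dots,i_4)\in\pi$ and $1\le i'_b\le i_b$ for all $b$ then $(i'_1,\dots,i'_4)\in\pi$. Characters are finite $\mathbb Z$-combinations of Laurent monomials; after substituting $q_4=(q_1q_2q_3)^{-1}$ the characters above are Laurent polynomials in $q_1,q_2,q_3$ and $K$ ($x$ cancels). $\mathbf X^\vee$ replaces each monomial $m$ by $m^{-1}$. $\mathbf P_a^\vee=1-q_a^{-1}$, and for $S\subseteq\{1,2,3,4\}$, $\mathbf P_S^\vee=\prod_{b\in S}(1-q_b^{-1})$; $\bar a=\{1,2,3,4\}\setminus\{a\}$. A character is movable if its constant-monomial coefficient is zero; for a movable character $\sum_m n_m m$ the index is $\mathbb I[\sum_m n_m m]=\prod_m(1-m^{-1})^{n_m}$. The characters inside both indices are movable, so both sides are well-defined. *)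

From HB Require Import structures.
From mathcomp Require Import all_boot all_order all_algebra.
From mathcomp Require Import fraction.
From mathcomp Require Import mpoly.
Set Implicit Arguments. Unset Strict Implicit. Unset Printing Implicit Defensive.
Import Order.TTheory GRing.Theory Num.Theory.
Local Open Scope ring_scope.

(* a box (i_1,i_2,i_3,i_4) in Z_{>=1}^4; coordinate b of the paper is
   index b-1 : 'I_4 here *)
Definition box := {ffun 'I_4 -> nat}.

Definition solid_partition (pi : seq box) : Prop :=
  [/\ uniq pi,
      (forall v, v \in pi -> forall b, (1 <= v b)%N) &
      (forall v w : box, v \in pi -> (forall b, (1 <= w b <= v b)%N) ->
         w \in pi)].

Definition sigma4 (pi : seq box) : nat :=
  count (fun v : box =>
     [&& v (inord 0 : 'I_4) == v (inord 1 : 'I_4), v (inord 1 : 'I_4) == v (inord 2 : 'I_4)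
       & (v (inord 2 : 'I_4) < v (inord 3 : 'I_4))%N]) pi.

(* exponent vectors w.r.t. the variables (q1, q2, q3, x, K) = indices 0..4,
   after the substitution q4 = (q1 q2 q3)^{-1} *)
Definition mono := {ffun 'I_5 -> int}.

Definition mono1 : mono := [ffun _ => 0].
Definition mono_mul (m n : mono) : mono := [ffun j => m j + n j].
Definition mono_inv (m : mono) : mono := [ffun j => - m j].
Definition unit_mono (k : nat) : mono := [ffun j : 'I_5 => ((j : nat) == k)%:Z].

Definition qmon (b : 'I_4) : mono :=
  if (b : nat) == 3%N then [ffun j : 'I_5 => if (j < 3)%N then -1 else 0]
  else unit_mono b.
Definition xmon : mono := unit_mono 3.
Definition Kmon : mono := unit_mono 4.

Definition boxmon (v : box) : mono :=
  [ffun j => xmon j + \sum_(b < 4) ((v b)%:Z - 1) * qmon b j].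

Definition chr := seq (mono * int).

Definition chr_mon (m : mono) : chr := [:: (m, 1)].
Definition chr_one : chr := chr_mon mono1.
Definition chr_add (c d : chr) : chr := c ++ d.
Definition chr_opp (c : chr) : chr := [seq (p.1, - p.2) | p <- c].
Definition chr_sub (c d : chr) : chr := chr_add c (chr_opp d).
Definition chr_mul (c d : chr) : chr :=
  [seq (mono_mul p.1 r.1, p.2 * r.2) | p <- c, r <- d].
Definition chr_dual (c : chr) : chr := [seq (mono_inv p.1, p.2) | p <- c].

Definition coef (c : chr) (m : mono) : int := \sum_(p <- c | p.1 == m) p.2.
Definition movable (c : chr) : Prop := coef c mono1 = 0.

Definition Pdual (S : seq 'I_4) : chr :=
  foldr (fun b acc => chr_mul (chr_sub chr_one (chr_mon (mono_inv (qmon b)))) acc)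
        chr_one S.
Definition Pa_dual (a : 'I_4) : chr := Pdual [:: a].
Definition Pabar_dual (a : 'I_4) : chr := Pdual [seq b <- enum 'I_4 | b != a].
Definition P123_dual : chr := Pdual [:: inord 0; inord 1; inord 2].

Definition Rchr (pi : seq box) : chr := [seq (boxmon v, 1) | v <- pi].

Definition RF := {fraction {mpoly int[5]}}.
Definition var (j : 'I_5) : RF := FracField.tofrac ('X_j : {mpoly int[5]}).

Definition ev (k : RF) (m : mono) : RF :=
  (\prod_(j < 4) var (widen_ord (leqnSn 4) j) ^ m (widen_ord (leqnSn 4) j))
  * k ^ m ord_max.

(* I[sum_m n_m m] = prod_m (1 - m^{-1})^{n_m}, each factor evaluated with K := k
   (k = var ord_max : generic K; k = value of q_a : specialization K = q_a) *)
Definition index (k : RF) (c : chr) : RF :=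
  \prod_(m <- undup (map fst c)) (1 - (ev k m)^-1) ^ coef c m.

Definition Kgen : RF := var ord_max.
Definition qval (a : 'I_4) : RF := ev Kgen (qmon a).

Definition chrD8 (pi : seq box) : chr :=
  chr_add (chr_opp (chr_mul (chr_sub chr_one (chr_mon (mono_inv Kmon)))
                            (chr_mul (chr_mon (mono_inv xmon)) (Rchr pi))))
          (chr_mul P123_dual (chr_mul (chr_dual (Rchr pi)) (Rchr pi))).
Definition chrD6 (a : 'I_4) (pi : seq box) : chr :=
  chr_add (chr_opp (chr_mul (Pa_dual a)
                            (chr_mul (chr_mon (mono_inv xmon)) (Rchr pi))))
          (chr_mul (Pabar_dual a) (chr_mul (chr_dual (Rchr pi)) (Rchr pi))).

Definition ZD8 (pi : seq box) (k : RF) : RF := index k (chrD8 pi).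
Definition ZD6 (a : 'I_4) (pi : seq box) : RF := index Kgen (chrD6 a pi).

From Pilot Require Import Defs.
From mathcomp Require Import all_boot all_algebra.
From mathcomp Require Import fraction.
From mathcomp Require Import mpoly.
From mathcomp Require Import ring zify.
Set Implicit Arguments. Unset Strict Implicit. Unset Printing Implicit Defensive.
Import GRing.Theory.
Local Open Scope ring_scope.

(* After K := q_a the linear terms -(1 - K^-1) x^-1 R and -P_a^v x^-1 R have the same
   index monomial by monomial, and for a = 4 the quadratic terms coincide.  For a <> 4
   write {a, b, c, 4} = {1, 2, 3, 4}, so that P_123 = P_a P_b P_c and P_abar = P_4 P_b P_c.
   With t_uw = R_u^-1 R_w and Phi(s) the index of P_b P_c s, the two quadratic terms give
   prod_{u,w} Phi(t_uw) / Phi(q_a^-1 t_uw) and prod_{u,w} Phi(t_uw) / Phi(q_4^-1 t_uw).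
   Exchanging u and w and using q_a q_b q_c q_4 = 1 turns q_4^-1 t_wu into the inverse of
   q_b^-1 q_c^-1 q_a^-1 t_uw.  As 1 - m = -m (1 - m^-1), inverting all monomials of
   P_b P_c s multiplies its index by (-1)^N, the monomial factors cancelling, where N counts
   the monomials s, q_b^-1 s, q_c^-1 s, q_b^-1 q_c^-1 s equal to 1.  For s = q_a^-1 t_uw
   these are the w obtained from u by lowering the coordinate 4 and some of the
   coordinates b, c; summed over w in pi the count is odd exactly when u = (1,1,1,j) with
   j > 1, which produces (-1)^sigma_4(pi).  The same computation, applied to the evaluation
   recording only the constant monomial, shows that the two characters have the same
   constant coefficient, which is all the index sees of that monomial. *)

Lemma mono_mul1m m : mono_mul mono1 m = m.
Proof. by apply/ffunP => j; rewrite !ffunE add0r. Qed.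

Lemma mono_mulm1 m : mono_mul m mono1 = m.
Proof. by apply/ffunP => j; rewrite !ffunE addr0. Qed.

Lemma mono_inv_eq1 m : (mono_inv m == mono1) = (m == mono1).
Proof.
apply/eqP/eqP => [m_inv1|->]; last by apply/ffunP => j; rewrite !ffunE oppr0.
apply/ffunP => j; have := congr1 (fun m : mono => m j) m_inv1.
by rewrite !ffunE => /eqP; rewrite oppr_eq0 => /eqP.
Qed.

Definition qpow (n : 'I_4 -> int) : mono := [ffun j => \sum_(b < 4) n b * qmon b j].

Lemma eq_qpow n n' : n =1 n' -> qpow n = qpow n'.
Proof. by move=> nn'; apply/ffunP => j; rewrite !ffunE; apply: eq_bigr => b _; rewrite nn'. Qed.

Lemma qpowD n n' : qpow (fun b => n b + n' b) = mono_mul (qpow n) (qpow n').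
Proof. by apply/ffunP => j; rewrite !ffunE -big_split; apply: eq_bigr => b _; rewrite mulrDl. Qed.

Lemma qpowN n : qpow (fun b => - n b) = mono_inv (qpow n).
Proof. by apply/ffunP => j; rewrite !ffunE -sumrN; apply: eq_bigr => b _; rewrite mulNr. Qed.

Lemma qmon_qpow b : qmon b = qpow (fun k => (k == b)%:Z).
Proof.
apply/ffunP => j; rewrite ffunE (bigD1 b) //= eqxx mul1r big1 ?addr0 // => k /negbTE ->.
by rewrite mul0r.
Qed.

Lemma qpowE n (j : 'I_5) : qpow n j = if (j < 3)%N then n (inord j) - n ord_max else 0.
Proof.
rewrite ffunE !big_ord_recr big_ord0 /= add0r /qmon /=.
case: j => [[|[|[|[|[|j]]]]] lt_j5] //=; rewrite !ffunE /= ?mulr0 ?mulr1 ?addr0 ?add0r //.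
all: by rewrite mulrN1; congr (n _ - _); apply/val_inj; rewrite /= inordK.
Qed.

Lemma qpow_Kfree n : qpow n ord_max = 0.
Proof. by rewrite qpowE. Qed.

Lemma qpow_eq1 n k0 : qpow n = mono1 <-> forall k, n k = n k0.
Proof.
suff qpow_eq1_max : qpow n = mono1 <-> forall k, n k = n ord_max.
  rewrite qpow_eq1_max; split=> [n_const k|n_const k]; first by rewrite n_const (n_const k0).
  by rewrite n_const [RHS]n_const.
split=> [n1 k|n_const]; last first.
  by apply/ffunP => j; rewrite qpowE ffunE; case: ifP => // _; rewrite !n_const subrr.
case: (ltnP k 3) => [lt_k3|ge_k3]; last by congr n; apply/val_inj => /=; have := ltn_ord k; lia.
have := congr1 (fun m : mono => m (inord k)) n1; rewrite qpowE ffunE inordK ?lt_k3; last by lia.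
by move/eqP; rewrite subr_eq0 inord_val => /eqP.
Qed.

Lemma qpow_eq n n' (x : int) : (forall k, n k = x + n' k) -> qpow n = qpow n'.
Proof. by move=> nn'; rewrite (eq_qpow nn') qpowD (proj2 (qpow_eq1 _ ord0)) ?mono_mul1m. Qed.

Definition qshift (b : 'I_4) (m : mono) : mono := mono_mul (mono_inv (qmon b)) m.

Lemma qshiftC b b' m : qshift b (qshift b' m) = qshift b' (qshift b m).
Proof. by apply/ffunP => j; rewrite !ffunE addrCA. Qed.

Lemma qshift_qpow b n : qshift b (qpow n) = qpow (fun k => - (k == b)%:Z + n k).
Proof. by rewrite qpowD qpowN -qmon_qpow. Qed.

Lemma foldr_qshift_qpow R n :
  foldr qshift (qpow n) R = qpow (fun k => n k - (count_mem k R)%:Z).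
Proof.
elim: R => [|b R IH] /=; first by apply: eq_qpow => k; rewrite subr0.
by rewrite IH qshift_qpow; apply: eq_qpow => k; rewrite eq_sym PoszD; ring.
Qed.

Lemma boxmon_qpow v : boxmon v = mono_mul xmon (qpow (fun b => (v b)%:Z - 1)).
Proof. by apply/ffunP => j; rewrite !ffunE. Qed.

Definition boxdiff (u w : box) : mono := mono_mul (mono_inv (boxmon u)) (boxmon w).

Lemma boxdiff_qpow u w : boxdiff u w = qpow (fun b => (w b)%:Z - (u b)%:Z).
Proof.
apply/ffunP => j; rewrite !ffunE opprD addrACA addNr add0r -sumrN -big_split /=.
by apply: eq_bigr => b _; ring.
Qed.

Definition xinvR (v : box) : mono := mono_mul (mono_inv xmon) (boxmon v).

Lemma xinvR_qpow v : xinvR v = qpow (fun b => (v b)%:Z - 1).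
Proof. by rewrite /xinvR boxmon_qpow; apply/ffunP => j; rewrite !ffunE addKr. Qed.

Lemma Kinv_xinvR_neq1 v : mono_mul (mono_inv Kmon) (xinvR v) != mono1.
Proof.
apply/eqP => /(congr1 (fun m : mono => m ord_max)).
by rewrite xinvR_qpow ffunE qpowE !ffunE.
Qed.

(* Box entries have type [(fun=> nat) k]; [cbv beta] turns them into [nat] for [lia]. *)
Lemma qshift_xinvR_neq1 (a : 'I_4) (v : box) :
  (forall k, 0 < v k)%N -> v a = 1%N -> qshift a (xinvR v) != mono1.
Proof.
move=> v_pos va; rewrite xinvR_qpow qshift_qpow; apply/eqP => /(qpow_eq1 _ a) n_const.
pose k : 'I_4 := if a == ord0 then ord_max else ord0.
have ka : k != a by rewrite /k; case: ifP => [/eqP -> //|/negbT]; rewrite eq_sym.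
by move: (n_const k) (v_pos k); rewrite (negbTE ka) eqxx va; cbv beta; lia.
Qed.

Definition lower_box (u : box) (R : seq 'I_4) : box := [ffun k => u k - (k \notin R)]%N.

Lemma foldr_qshift_boxdiff_eq1 (R : seq 'I_4) (a : 'I_4) (u w : box) :
  uniq R -> a \in R -> u a = w a -> (forall k, 0 < w k)%N ->
  (foldr qshift (boxdiff u w) R == mono1) = (w == lower_box u R).
Proof.
move=> R_uniq aR uwa w_pos; rewrite boxdiff_qpow foldr_qshift_qpow.
apply/eqP/eqP => [/(qpow_eq1 _ a) n_const|wE].
  apply/ffunP => k; rewrite ffunE; move: (n_const k) (w_pos k).
  by rewrite !count_uniq_mem // aR uwa subrr; case: (k \in R) => /=; cbv beta; lia.
apply/(qpow_eq1 _ a) => k; move: uwa (w_pos k) (w_pos a).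
by rewrite wE !ffunE !count_uniq_mem // aR; case: (k \in R) => /=; cbv beta; lia.
Qed.

Lemma count_foldr_qshift_boxdiff (pi : seq box) (R : seq 'I_4) (a : 'I_4) (u : box) :
  solid_partition pi -> (forall v, v \in pi -> v a = 1%N) -> u \in pi ->
  uniq R -> a \in R ->
  count (fun w => foldr qshift (boxdiff u w) R == mono1) pi = [forall k, (k \notin R) < u k]%N.
Proof.
case=> pi_uniq pi_pos pi_closed pi_a upi R_uniq aR.
rewrite (eq_in_count (a2 := pred1 (lower_box u R))) => [|w wpi]; last first.
  by apply: (foldr_qshift_boxdiff_eq1 (a := a)) => // [|k]; [rewrite !pi_a | apply: pi_pos].
rewrite count_uniq_mem //; congr nat_of_bool; apply/idP/forallP => [/pi_pos low_pos k|lt_u].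
  by have := low_pos k; rewrite ffunE subn_gt0.
by apply: (pi_closed u) => // k; rewrite ffunE subn_gt0 leq_subr andbT.
Qed.

Lemma enum_ord4 : enum 'I_4 = [:: inord 0; inord 1; inord 2; ord_max].
Proof. by apply: (inj_map val_inj); rewrite val_enum_ord /= !inordK. Qed.

Lemma inord3 : inord 3 = ord_max :> 'I_4.
Proof. by apply/val_inj; rewrite /= inordK. Qed.

Lemma forall_ord4 (a b c d : 'I_4) (P : pred 'I_4) :
  perm_eq [:: a; b; c; d] (enum 'I_4) -> [forall k, P k] = [&& P a, P b, P c & P d].
Proof.
move=> abcd; transitivity (all P [:: a; b; c; d]); last by rewrite /= andbT.
rewrite (perm_all _ abcd).
by apply/forallP/allP => [Pk k _|Pk k]; last rewrite Pk ?mem_enum.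
Qed.

Lemma perm_ord4_count (a b c d k : 'I_4) : perm_eq [:: a; b; c; d] (enum 'I_4) ->
  ((k == a) + (k == b) + (k == c) + (k == d) = 1)%N.
Proof.
move/permP/(_ (pred1 k)) => count_k.
transitivity (count (pred1 k) [:: a; b; c; d]); first by rewrite /= !(eq_sym _ k) addn0 !addnA.
by rewrite count_k count_uniq_mem ?enum_uniq // mem_enum.
Qed.

Lemma perm_ord4_012 (a b c : 'I_4) : perm_eq [:: a; b; c; ord_max] (enum 'I_4) ->
  perm_eq [:: inord 0; inord 1; inord 2] [:: a; b; c].
Proof. by move=> abc; rewrite -(perm_cat2r [:: ord_max]) /= -enum_ord4 perm_sym. Qed.

Lemma ord4_complement (a : 'I_4) : a != ord_max ->
  exists b c, perm_eq [:: a; b; c; ord_max] (enum 'I_4).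
Proof.
have ordE k (lt_k4 : (k < 4)%N) : Ordinal lt_k4 = inord k by apply/val_inj; rewrite /= inordK.
case: a => [[|[|[|[|//]]]] lt_a4] a3; rewrite ordE.
- by exists (inord 1), (inord 2); rewrite enum_ord4.
- by exists (inord 0), (inord 2); apply/permP => P; rewrite enum_ord4 /=; lia.
- by exists (inord 0), (inord 1); apply/permP => P; rewrite enum_ord4 /=; lia.
- by rewrite -val_eqE in a3.
Qed.

Lemma var_neq0 j : var j != 0.
Proof.
rewrite /var tofrac_eq0; apply/eqP => /(congr1 (fun p : {mpoly int[5]} => p@_U_(j))).
by rewrite mcoeffX mcoeff0 eqxx.
Qed.

Lemma ev_neq0 k m : k != 0 -> ev k m != 0.
Proof.
move=> k0; apply: mulf_neq0; last exact: expfz_neq0.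
by apply/prodf_neq0 => j _; apply/expfz_neq0/var_neq0.
Qed.

Lemma evM k m n : k != 0 -> ev k (mono_mul m n) = ev k m * ev k n.
Proof.
move=> k0; rewrite /ev ffunE expfzDr // mulrACA -big_split /=; congr (_ * _).
by apply: eq_bigr => j _; rewrite ffunE expfzDr ?var_neq0.
Qed.

Lemma ev1 k : ev k mono1 = 1.
Proof. by rewrite /ev big1 ?ffunE ?mul1r // => j _; rewrite ffunE. Qed.

Lemma evV k m : k != 0 -> ev k (mono_inv m) = (ev k m)^-1.
Proof.
move=> k0; apply: (mulIf (ev_neq0 m k0)); rewrite mulVf ?ev_neq0 // -evM // -(ev1 k).
by congr ev; apply/ffunP => j; rewrite !ffunE addNr.
Qed.

Lemma ev_Kfree (k k' : RF) (m : mono) : m ord_max = 0 -> ev k m = ev k' m.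
Proof. by move=> m0; rewrite /ev m0 !expr0z. Qed.

Lemma ev_Kmon k : ev k Kmon = k.
Proof.
rewrite /ev big1 ?mul1r ?ffunE // => j _.
by rewrite ffunE; case: j => [[|[|[|[|]]]] ?].
Qed.

Lemma var_monomial_inj (p p' : 'I_5 -> nat) :
  \prod_(j < 5) var j ^+ p j = \prod_(j < 5) var j ^+ p' j -> p =1 p'.
Proof.
have XE f : \prod_(j < 5) var j ^+ f j = tofrac ('X_[[multinom f j | j < 5]] : {mpoly int[5]}).
  by rewrite mpolyXE_id rmorph_prod; apply: eq_bigr => j _; rewrite mnmE rmorphXn.
rewrite !XE => /eqP; rewrite tofrac_eq => /eqP /(congr1 (mcoeff [multinom p j | j < 5])).
rewrite !mcoeffX eqxx; case: eqP => // pp' _ j.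
by have := congr1 (fun mm : 'X_{1..5} => mm j) pp'; rewrite !mnmE.
Qed.

Lemma ev_Kgen_eq1 m : ev Kgen m = 1 -> m = mono1.
Proof.
pose pos j := `|Num.max (m j) 0|%N; pose neg j := `|Num.max (- m j) 0|%N.
have split j : var j ^ m j = var j ^+ pos j / var j ^+ neg j.
  rewrite /pos /neg; case: (intP (m j)) => [|n|n] /=; rewrite expr0 ?invr1 ?mulr1 //.
  by rewrite mul1r -invr_expz.
have -> : ev Kgen m = \prod_(j < 5) var j ^ m j by rewrite /ev [RHS]big_ord_recr.
rewrite (eq_bigr _ (fun j _ => split j)) big_split /= prodfV => /divr1_eq.
move/var_monomial_inj => pos_neg; apply/ffunP => j; have := pos_neg j.
by rewrite ffunE /pos /neg; case: (intP (m j)) => //= n; lia.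
Qed.

Lemma ev_Kgen_neq1 m : m != mono1 -> ev Kgen m != 1.
Proof. by apply: contra => /eqP /ev_Kgen_eq1 ->. Qed.

Lemma qval_neq0 a : qval a != 0.
Proof. exact/ev_neq0/var_neq0. Qed.

Lemma ev_Kinv_xinvR a v :
  ev (qval a) (mono_mul (mono_inv Kmon) (xinvR v)) = ev Kgen (qshift a (xinvR v)).
Proof.
have Kgen0 : Kgen != 0 := var_neq0 ord_max.
rewrite /qshift (evM _ _ (qval_neq0 a)) (evM _ _ Kgen0) (evV _ (qval_neq0 a)) (evV _ Kgen0).
by rewrite ev_Kmon (@ev_Kfree _ Kgen (xinvR v)) ?xinvR_qpow ?qpow_Kfree.
Qed.

Section CharacterProduct.
Variable F : fieldType.
Implicit Types (h : mono -> F) (c d : chr).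

Definition chr_prod h c : F := \prod_(p <- c) h p.1 ^ p.2.

Lemma chr_prod_add h c d : chr_prod h (chr_add c d) = chr_prod h c * chr_prod h d.
Proof. exact: big_cat. Qed.

Lemma chr_prod_opp h c : chr_prod h (chr_opp c) = (chr_prod h c)^-1.
Proof. by rewrite /chr_prod big_map -prodfV; apply: eq_bigr => p _; rewrite invr_expz. Qed.

Lemma chr_prod_mul h c d : chr_prod h (chr_mul c d) =
  \prod_(p <- c) \prod_(r <- d) h (mono_mul p.1 r.1) ^ (p.2 * r.2).
Proof. exact: big_allpairs_dep. Qed.

Lemma coef_notin c m : m \notin map fst c -> coef c m = 0.
Proof.
move=> cm; rewrite /coef big1_seq // => p /andP [/eqP pm pc].
by case/negP: cm; rewrite -pm map_f.
Qed.

Lemma prod_coef_undup h c : {in map fst c, forall m, h m != 0} ->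
  \prod_(m <- undup (map fst c)) h m ^ coef c m = chr_prod h c.
Proof.
move=> h_neq0.
transitivity (\prod_(m <- undup (map fst c)) \prod_(p <- c | p.1 == m) h p.1 ^ p.2).
  apply: eq_big_seq => m; rewrite mem_undup => /h_neq0 hm.
  rewrite /coef (big_morph (fun n => h m ^ n) (fun k l => expfzDr k l hm) (expr0z _)).
  by apply: eq_bigr => p /eqP ->.
rewrite (eq_bigr _ (fun m _ => big_mkcond _ _)) exchange_big /=.
apply: eq_big_seq => p pc; rewrite -big_mkcond big_const_seq /=.
rewrite (eq_count (a2 := pred1 p.1)) => [|m]; last by rewrite /= eq_sym.
by rewrite count_uniq_mem ?undup_uniq // mem_undup map_f //= mulr1.
Qed.

Definition mono1_marker (x : F) (m : mono) : F := if m == mono1 then x else 1.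

Lemma chr_prod_mono1_marker (x : F) c : x != 0 ->
  chr_prod (mono1_marker x) c = x ^ coef c mono1.
Proof.
move=> x0; rewrite /chr_prod /coef.
rewrite (big_morph (fun n => x ^ n) (fun k l => expfzDr k l x0) (expr0z _)) [RHS]big_mkcond.
by apply: eq_bigr => p _; rewrite /mono1_marker; case: eqP; rewrite ?exp1rz.
Qed.

Lemma prod2_mul (I : Type) (r : seq I) (G G' : I -> I -> F) :
  \prod_(u <- r) \prod_(w <- r) (G u w * G' u w) =
  (\prod_(u <- r) \prod_(w <- r) G u w) * \prod_(u <- r) \prod_(w <- r) G' u w.
Proof. by rewrite -big_split; apply: eq_bigr => u _; rewrite -big_split. Qed.

Lemma prod2_div (I : Type) (r : seq I) (G G' : I -> I -> F) :
  \prod_(u <- r) \prod_(w <- r) (G u w / G' u w) =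
  (\prod_(u <- r) \prod_(w <- r) G u w) / \prod_(u <- r) \prod_(w <- r) G' u w.
Proof. by rewrite -prodfV -big_split; apply: eq_bigr => u _; rewrite -prodfV -big_split. Qed.

Definition Pdual_prod h l t : F := \prod_(p <- Pdual l) h (mono_mul p.1 t) ^ p.2.

Lemma Pdual_prod_nil h t : Pdual_prod h [::] t = h t.
Proof. by rewrite /Pdual_prod big_seq1 mono_mul1m expr1z. Qed.

Lemma Pdual_prod_cons h b l t :
  Pdual_prod h (b :: l) t = Pdual_prod h l t / Pdual_prod h l (qshift b t).
Proof.
rewrite /Pdual_prod /= /chr_mul /= cats0 big_cat !big_map /= -prodfV; congr (_ * _).
  by apply: eq_bigr => p _; rewrite mono_mul1m mul1r.
apply: eq_bigr => p _; rewrite mulN1r invr_expz; congr (h _ ^ _).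
by apply/ffunP => j; rewrite !ffunE addrCA addrA.
Qed.

Lemma Pdual_prod_swap h b b' l t :
  Pdual_prod h (b :: b' :: l) t = Pdual_prod h (b' :: b :: l) t.
Proof. by rewrite !Pdual_prod_cons qshiftC !invfM !invrK; ring. Qed.

Lemma Pdual_prod_congr h b l l' :
  Pdual_prod h l =1 Pdual_prod h l' -> Pdual_prod h (b :: l) =1 Pdual_prod h (b :: l').
Proof. by move=> ll' t; rewrite !Pdual_prod_cons !ll'. Qed.

Lemma Pdual_prod_perm h l l' : perm_eq l l' -> Pdual_prod h l =1 Pdual_prod h l'.
Proof.
elim: l l' => [|b l IH] l'; first by rewrite perm_sym => /perm_nilP ->.
move=> ll'; have bl' : b \in l' by rewrite -(perm_mem ll') mem_head.
move: ll'; case/splitPr: bl' => l1 l2 ll'.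
have to_front : Pdual_prod h (l1 ++ b :: l2) =1 Pdual_prod h (b :: l1 ++ l2).
  elim: l1 {ll'} => [|b' l1 IH1] t //=.
  by rewrite (Pdual_prod_congr b' IH1) Pdual_prod_swap.
move=> t; rewrite to_front; apply: Pdual_prod_congr; apply: IH.
by rewrite -(perm_cons b) (perm_trans ll') // -cat1s perm_catCA.
Qed.

Lemma Pdual_prod_inv h rho l s : (forall m, h (mono_inv m) = rho m * h m) ->
  Pdual_prod h l (mono_inv (foldr qshift s l)) ^ ((-1) ^+ size l) =
  Pdual_prod rho l s * Pdual_prod h l s.
Proof.
move=> h_inv; elim: l s => [|b l IH] s; first by rewrite !Pdual_prod_nil expr1z.
have foldr_qshift : foldr qshift (qshift b s) l = qshift b (foldr qshift s l).
  by elim: l {IH} => //= b' l ->; rewrite qshiftC.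
have shift_inv : qshift b (mono_inv (qshift b (foldr qshift s l))) = mono_inv (foldr qshift s l).
  by apply/ffunP => j; rewrite !ffunE opprD opprK addKr.
rewrite !Pdual_prod_cons [foldr _ _ (_ :: _)]/= shift_inv -foldr_qshift exprS mulN1r -invr_expz.
by rewrite expfzMl exprz_inv -invr_expz !IH !invfM !invrK; ring.
Qed.

Lemma Pdual_prod_mulf (f g : mono -> F) l t :
  Pdual_prod (fun m => f m * g m) l t = Pdual_prod f l t * Pdual_prod g l t.
Proof. by rewrite /Pdual_prod -big_split; apply: eq_bigr => p _; rewrite expfzMl. Qed.

Lemma Pdual_prod_morph (f : mono -> F) (b c : 'I_4) t :
  (forall m n, f (mono_mul m n) = f m * f n) -> (forall m, f m != 0) ->
  Pdual_prod f [:: b; c] t = 1.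
Proof.
move=> fM f_neq0; rewrite !Pdual_prod_cons !Pdual_prod_nil /qshift !fM.
by field; rewrite !f_neq0 oner_eq0.
Qed.

Lemma Pdual_prod_qpow h h' l n : (forall n, h (qpow n) = h' (qpow n)) ->
  Pdual_prod h l (qpow n) = Pdual_prod h' l (qpow n).
Proof.
move=> hh'; elim: l n => [|b l IH] n; first by rewrite !Pdual_prod_nil.
by rewrite !Pdual_prod_cons qshift_qpow !IH.
Qed.

Lemma chr_prod_Pdual_RR h l pi :
  chr_prod h (chr_mul (Pdual l) (chr_mul (chr_dual (Rchr pi)) (Rchr pi))) =
  \prod_(u <- pi) \prod_(w <- pi) Pdual_prod h l (boxdiff u w).
Proof.
rewrite chr_prod_mul exchange_big /= /chr_mul big_allpairs_dep /chr_dual /Rchr !big_map.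
apply: eq_bigr => u _; rewrite big_map; apply: eq_bigr => w _.
by apply: eq_bigr => p _; rewrite !mulr1.
Qed.

Lemma chr_prod_mul_monR h L m pi :
  chr_prod h (chr_mul L (chr_mul (chr_mon m) (Rchr pi))) =
  \prod_(p <- L) \prod_(v <- pi) h (mono_mul p.1 (mono_mul m (boxmon v))) ^ p.2.
Proof.
rewrite chr_prod_mul; apply: eq_bigr => p _.
rewrite /chr_mul /chr_mon /= cats0 /Rchr -map_comp big_map.
by apply: eq_bigr => v _; rewrite !mulr1.
Qed.

End CharacterProduct.

Section Transfer.
Variables (F : fieldType) (h8 h6 : mono -> F) (a : 'I_4) (pi : seq box).
Hypothesis h8_qpow : forall n, h8 (qpow n) = h6 (qpow n).
Hypothesis h8_Kinv : forall v, v \in pi ->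
  h8 (mono_mul (mono_inv Kmon) (xinvR v)) = h6 (qshift a (xinvR v)).

Let RR := chr_mul (chr_dual (Rchr pi)) (Rchr pi).

Lemma chr_prod_linear_part :
  chr_prod h8 (chr_mul (chr_sub chr_one (chr_mon (mono_inv Kmon)))
                       (chr_mul (chr_mon (mono_inv xmon)) (Rchr pi))) =
  chr_prod h6 (chr_mul (Pa_dual a) (chr_mul (chr_mon (mono_inv xmon)) (Rchr pi))).
Proof.
rewrite !chr_prod_mul_monR /= !big_cons !big_nil /= -/(xinvR _); congr (_ * (_ * _)).
  by apply: eq_bigr => v _; rewrite !mono_mul1m -/(xinvR v) xinvR_qpow h8_qpow.
by apply: eq_big_seq => v vpi; rewrite -/(xinvR v) h8_Kinv // mono_mulm1.
Qed.

Lemma chr_prod_P123_RR : chr_prod h8 (chr_mul P123_dual RR) = chr_prod h6 (chr_mul P123_dual RR).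
Proof.
rewrite !chr_prod_Pdual_RR; apply: eq_bigr => u _; apply: eq_bigr => w _.
by rewrite boxdiff_qpow; apply: Pdual_prod_qpow.
Qed.

Lemma chr_prod_chrD6_transfer_ord_max : a = ord_max ->
  chr_prod h6 (chrD6 a pi) = chr_prod h8 (chrD8 pi).
Proof.
move=> a_max; rewrite /chrD6 /chrD8 2!chr_prod_add 2!chr_prod_opp chr_prod_linear_part.
have -> : Pabar_dual a = P123_dual by rewrite /Pabar_dual a_max enum_ord4 /= -!val_eqE /= !inordK.
by rewrite -/RR chr_prod_P123_RR.
Qed.

Variables (rho : mono -> F) (b c : 'I_4).
Hypothesis h6_inv : forall m, h6 (mono_inv m) = rho m * h6 m.
Hypothesis abc_perm : perm_eq [:: a; b; c; ord_max] (enum 'I_4).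

Lemma chr_prod_Pabar_RR :
  chr_prod h6 (chr_mul (Pabar_dual a) RR) = chr_prod h6 (chr_mul P123_dual RR) /
    \prod_(u <- pi) \prod_(w <- pi) Pdual_prod rho [:: b; c] (qshift a (boxdiff u w)).
Proof.
have P123_perm := perm_ord4_012 abc_perm.
have Pabar_perm : perm_eq [seq k <- enum 'I_4 | k != a] [:: ord_max; b; c].
  have := perm_uniq abc_perm; rewrite enum_uniq /= !inE !negb_or => /andP [/and3P [ab ac a3] _].
  have /(perm_filter (predC1 a)) /= : perm_eq (enum 'I_4) [:: a; b; c; ord_max].
    by rewrite perm_sym.
  rewrite eqxx !(eq_sym _ a) ab ac a3 => /perm_trans; apply.
  by rewrite -[X in perm_eq X _]/(rcons [:: b; c] ord_max) perm_rcons.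
(* Since q_a q_b q_c q_4 = 1, exchanging u and w turns the q_4-shifted factor into the
   inverse of the q_a-shifted one. *)
have Phi_swap u w : let s := qshift a (boxdiff u w) in
    Pdual_prod h6 [:: b; c] (qshift ord_max (boxdiff w u)) =
    Pdual_prod rho [:: b; c] s * Pdual_prod h6 [:: b; c] s.
  rewrite /= -(Pdual_prod_inv _ _ h6_inv) /= sqrrN expr1n expr1z; congr Pdual_prod.
  rewrite /= !boxdiff_qpow !qshift_qpow -qpowN; apply: (qpow_eq (x := -1)) => k.
  by have := perm_ord4_count k abc_perm; lia.
rewrite !chr_prod_Pdual_RR.
under eq_bigr => u _ do under eq_bigr => w _ do
  rewrite (Pdual_prod_perm _ Pabar_perm) Pdual_prod_cons.
under [in RHS]eq_bigr => u _ do under eq_bigr => w _ do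
  rewrite (Pdual_prod_perm _ P123_perm) Pdual_prod_cons.
rewrite !prod2_div [X in _ / X]exchange_big /=.
under [X in _ / X]eq_bigr => u _ do under eq_bigr => w _ do rewrite Phi_swap.
by rewrite prod2_mul invfM; ring.
Qed.

Lemma chr_prod_chrD6_transfer :
  chr_prod h6 (chrD6 a pi) = chr_prod h8 (chrD8 pi) /
    \prod_(u <- pi) \prod_(w <- pi) Pdual_prod rho [:: b; c] (qshift a (boxdiff u w)).
Proof.
rewrite /chrD6 /chrD8 2!chr_prod_add 2!chr_prod_opp chr_prod_linear_part.
by rewrite -/RR chr_prod_P123_RR chr_prod_Pabar_RR mulrA.
Qed.

End Transfer.

Definition index_factor (k : RF) (m : mono) : RF :=
  if m == mono1 then 1 else 1 - (ev k m)^-1.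

Lemma index_chr_prod (k : RF) (c : chr) :
  {in map fst c, forall m, m != mono1 -> ev k m != 1} ->
  Defs.index k c = 0 ^ coef c mono1 * chr_prod (index_factor k) c.
Proof.
move=> ev_neq1; rewrite /Defs.index -prod_coef_undup => [|m /ev_neq1]; last first.
  rewrite /index_factor; case: eqP => [_ _|_ /(_ isT)]; first exact: oner_neq0.
  by rewrite subr_eq0 [1 == _]eq_sym invr_eq1.
have split m : (1 - (ev k m)^-1) ^ coef c m =
    (if m == mono1 then 0 ^ coef c mono1 else 1) * index_factor k m ^ coef c m.
  rewrite /index_factor; case: eqP => [->|_] /=; last by rewrite mul1r.
  by rewrite ev1 invr1 subrr exp1rz mulr1.
rewrite (eq_bigr _ (fun m _ => split m)) big_split /= -big_mkcond /=.
rewrite big_const_seq count_uniq_mem ?undup_uniq // mem_undup.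
by case: (boolP (_ \in _)) => [_|/coef_notin ->]; rewrite /= ?mulr1 ?expr0z.
Qed.

Definition mono1_sign (m : mono) : RF := (-1) ^+ (m == mono1).
Definition dual_ratio (m : mono) : RF := - mono1_sign m * ev Kgen m.

Lemma index_factor_inv m :
  index_factor Kgen (mono_inv m) = dual_ratio m * index_factor Kgen m.
Proof.
rewrite /index_factor /dual_ratio /mono1_sign mono_inv_eq1.
case: eqP => [->|_]; first by rewrite ev1 /=; ring.
have ev0 : ev Kgen m != 0 by apply/ev_neq0/var_neq0.
by rewrite evV ?var_neq0 // invrK /= expr0 mulN1r mulNr mulrBr mulr1 mulfV // opprB.
Qed.

Lemma Pdual_prod_dual_ratio b c s : Pdual_prod dual_ratio [:: b; c] s =
  mono1_sign s * mono1_sign (qshift b s) * mono1_sign (qshift c s) *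
  mono1_sign (qshift c (qshift b s)).
Proof.
have Kgen0 : Kgen != 0 := var_neq0 ord_max.
rewrite /dual_ratio (Pdual_prod_mulf (fun m => - mono1_sign m)).
rewrite (Pdual_prod_morph (f := ev Kgen)) => [||m]; last 2 first.
- by move=> m n; rewrite evM.
- exact: ev_neq0.
have signV m : (- mono1_sign m)^-1 = - mono1_sign m by rewrite invrN invr_sign.
by rewrite mulr1 !Pdual_prod_cons !Pdual_prod_nil !invfM invrK !signV; ring.
Qed.

Lemma prod_sign (I : Type) (r : seq I) (P : pred I) :
  \prod_(i <- r) (-1) ^+ P i = (-1) ^+ count P r :> RF.
Proof.
elim: r => [|i r IH]; first by rewrite big_nil.
by rewrite big_cons IH /= exprD.
Qed.

Definition sigma4_box (v : box) : bool :=
  [&& v (inord 0 : 'I_4) == v (inord 1 : 'I_4), v (inord 1 : 'I_4) == v (inord 2 : 'I_4)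
    & (v (inord 2 : 'I_4) < v (inord 3 : 'I_4))%N].

Section Sign.
Variables (a b c : 'I_4) (pi : seq box).
Hypothesis abc_perm : perm_eq [:: a; b; c; ord_max] (enum 'I_4).
Hypothesis pi_sp : solid_partition pi.
Hypothesis pi_a : forall v, v \in pi -> v a = 1%N.

Lemma sigma4_boxE (u : box) : u \in pi ->
  sigma4_box u = [&& u b == 1, u c == 1 & 1 < u ord_max]%N.
Proof.
move=> upi; have [_ pi_pos _] := pi_sp.
have u_pos k : (0 < u k)%N by apply: pi_pos.
have ua : u a = 1%N by apply: pi_a.
have P012 := perm_ord4_012 abc_perm.
have a012 : a \in [:: inord 0; inord 1; inord 2] by rewrite (perm_mem P012) mem_head.
rewrite /sigma4_box inord3.
transitivity ([&& u (inord 0) == 1, u (inord 1) == 1 & u (inord 2) == 1] && (1 < u ord_max))%N.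
  move: (u_pos (inord 0)) (u_pos (inord 1)) (u_pos (inord 2)) a012 ua.
  by rewrite !inE => ? ? ? /or3P [] /eqP ->; cbv beta; lia.
have := perm_all (fun k => u k == 1)%N P012; rewrite /= !andbT => ->.
by rewrite ua eqxx /= andbA.
Qed.

Lemma prod_Pdual_dual_ratio (u : box) : u \in pi ->
  \prod_(w <- pi) Pdual_prod dual_ratio [:: b; c] (qshift a (boxdiff u w)) =
  (-1) ^+ sigma4_box u.
Proof.
move=> upi; have [_ pi_pos _] := pi_sp; have u_pos k : (0 < u k)%N by apply: pi_pos.
have eq1 k : (u k == 1)%N = ~~ (1 < u k)%N by move: (u_pos k); cbv beta; lia.
have := perm_uniq abc_perm; rewrite enum_uniq /= !inE !negb_or.
case/and4P => /and3P [ab ac a3] /andP [bc b3] c3 _.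
have [ba ca cb] : [/\ (b == a) = false, (c == a) = false & (c == b) = false].
  by split; apply: negbTE; rewrite eq_sym.
have [ma mb mc] : [/\ (ord_max == a) = false, (ord_max == b) = false & (ord_max == c) = false].
  by split; apply: negbTE; rewrite eq_sym.
have lowered R : uniq (R ++ [:: a]) ->
    \prod_(w <- pi) mono1_sign (foldr qshift (boxdiff u w) (R ++ [:: a])) =
    (-1) ^+ [forall k, (k \notin R ++ [:: a]) < u k]%N.
  move=> R_uniq; rewrite /mono1_sign prod_sign (count_foldr_qshift_boxdiff (a := a)) //.
  by rewrite mem_cat mem_head orbT.
have uniq_cba : uniq [:: c; b; a] by rewrite /= !inE !negb_or cb ca ba.
have uniq_ba : uniq [:: b; a] by case/andP: uniq_cba.
have uniq_ca : uniq [:: c; a] by rewrite /= inE ca.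
under eq_bigr => w _ do rewrite Pdual_prod_dual_ratio.
rewrite !big_split /= (lowered [::]) // (lowered [:: b]) // (lowered [:: c]) //.
rewrite (lowered [:: c; b]) // sigma4_boxE // !(forall_ord4 _ abc_perm) /= !inE.
rewrite !eqxx ba ca cb ma mb mc (negbTE bc) !orbT /= !u_pos !eq1.
by case: (1 < u b)%N; case: (1 < u c)%N; case: (1 < u ord_max)%N => /=; ring.
Qed.

Lemma prod2_Pdual_dual_ratio :
  \prod_(u <- pi) \prod_(w <- pi) Pdual_prod dual_ratio [:: b; c] (qshift a (boxdiff u w)) =
  (-1) ^+ sigma4 pi.
Proof. by rewrite -prod_sign; apply: eq_big_seq => u; apply: prod_Pdual_dual_ratio. Qed.

End Sign.

Lemma Pdual_Kfree l p : p \in Pdual l -> p.1 ord_max = 0.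
Proof.
elim: l p => [|b l IH] p /=; first by rewrite inE => /eqP -> /=; rewrite ffunE.
case/allpairsPdep => q [r [q_in r_in ->]] /=; rewrite ffunE (IH r) // addr0.
by move: q_in; rewrite !inE => /orP [] /eqP -> /=; rewrite !ffunE // qmon_qpow qpow_Kfree oppr0.
Qed.

Lemma mem_chrD8 pi m : m \in map fst (chrD8 pi) ->
  m ord_max = 0 \/ exists2 v, v \in pi & m = mono_mul (mono_inv Kmon) (xinvR v).
Proof.
rewrite /chrD8 /chr_add map_cat mem_cat => /orP [].
  rewrite /chr_opp -map_comp => /mapP [p /allpairsPdep [q [r [q_in r_in ->]]] ->] /=.
  case/allpairsPdep: r_in => r' [s [r'_in /mapP [v vpi ->] ->]] /=.
  move: q_in r'_in; rewrite !inE => /orP [] /eqP -> /eqP -> /=.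
    by left; rewrite mono_mul1m -/(xinvR v) xinvR_qpow qpow_Kfree.
  by right; exists v.
case/mapP => p /allpairsPdep [q [r [q_in r_in ->]]] -> /=; left.
rewrite ffunE (Pdual_Kfree q_in) add0r.
case/allpairsPdep: r_in => r' [s [/mapP [r'' /mapP [u upi ->] ->] /mapP [w wpi ->] ->]] /=.
by rewrite -/(boxdiff u w) boxdiff_qpow qpow_Kfree.
Qed.

Section Specialization.
Variables (a : 'I_4) (pi : seq box).
Hypothesis pi_sp : solid_partition pi.
Hypothesis pi_a : forall v, v \in pi -> v a = 1%N.

Lemma qshift_xinvR_in_neq1 v : v \in pi -> qshift a (xinvR v) != mono1.
Proof.
by case: pi_sp => _ pi_pos _ vpi; apply: qshift_xinvR_neq1; [apply: pi_pos | apply: pi_a].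
Qed.

Lemma index_factor_qpow n : index_factor (qval a) (qpow n) = index_factor Kgen (qpow n).
Proof. by rewrite /index_factor (ev_Kfree _ Kgen) // qpow_Kfree. Qed.

Lemma index_factor_Kinv v : v \in pi ->
  index_factor (qval a) (mono_mul (mono_inv Kmon) (xinvR v)) =
  index_factor Kgen (qshift a (xinvR v)).
Proof.
move=> vpi; rewrite /index_factor (negbTE (Kinv_xinvR_neq1 v)).
by rewrite (negbTE (qshift_xinvR_in_neq1 vpi)) ev_Kinv_xinvR.
Qed.

Lemma mono1_marker_Kinv (x : rat) v : v \in pi ->
  mono1_marker x (mono_mul (mono_inv Kmon) (xinvR v)) = mono1_marker x (qshift a (xinvR v)).
Proof.
move=> vpi; rewrite /mono1_marker (negbTE (Kinv_xinvR_neq1 v)).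
by rewrite (negbTE (qshift_xinvR_in_neq1 vpi)).
Qed.

Lemma coef_chrD6_chrD8 : coef (chrD6 a pi) mono1 = coef (chrD8 pi) mono1.
Proof.
apply: (@ieexprIz rat 2) => //; rewrite -!chr_prod_mono1_marker //.
have [a_max|/ord4_complement [b [c abc_perm]]] := eqVneq a ord_max.
  exact: chr_prod_chrD6_transfer_ord_max (mono1_marker_Kinv _) a_max.
rewrite (chr_prod_chrD6_transfer (rho := fun=> 1) _ (mono1_marker_Kinv _) _ abc_perm) //.
  by rewrite big1 ?divr1 // => u _; rewrite big1 // => w _; apply: Pdual_prod_morph.
by move=> m; rewrite /mono1_marker mono_inv_eq1 mul1r.
Qed.

Lemma sigma4_ord_max : a = ord_max -> sigma4 pi = 0%N.
Proof.
move=> a_max; rewrite /sigma4 (eq_in_count (a2 := pred0)) ?count_pred0 // => v vpi /=.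
have [_ pi_pos _] := pi_sp; have := pi_a vpi; have := pi_pos v vpi (inord 2).
rewrite inord3 -a_max; cbv beta => pos2 ->.
by rewrite ltnS leqn0 (gtn_eqF pos2) !andbF.
Qed.

Lemma chr_prod_chrD6_chrD8 :
  chr_prod (index_factor Kgen) (chrD6 a pi) =
  (-1) ^+ sigma4 pi * chr_prod (index_factor (qval a)) (chrD8 pi).
Proof.
have [a_max|/ord4_complement [b [c abc_perm]]] := eqVneq a ord_max.
  rewrite sigma4_ord_max // mul1r.
  exact: chr_prod_chrD6_transfer_ord_max index_factor_qpow index_factor_Kinv a_max.
rewrite (chr_prod_chrD6_transfer index_factor_qpow index_factor_Kinv index_factor_inv abc_perm).
by rewrite prod2_Pdual_dual_ratio // invr_sign mulrC.
Qed.

End Specialization.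

Theorem lemma6p14 (a : 'I_4) (pi : seq box) :
  solid_partition pi ->
  (forall v, v \in pi -> v a = 1%N) ->
  (-1) ^+ sigma4 pi * ZD8 pi (qval a) = ZD6 a pi.
Proof.
move=> pi_sp pi_a.
rewrite /ZD8 /ZD6 !index_chr_prod => [|m _|m /mem_chrD8 [m_Kfree|[v vpi ->]] m1].
- by rewrite coef_chrD6_chrD8 // chr_prod_chrD6_chrD8 // mulrCA.
- exact: ev_Kgen_neq1.
- by rewrite (ev_Kfree _ Kgen) // ev_Kgen_neq1.
- by rewrite ev_Kinv_xinvR ev_Kgen_neq1 // (qshift_xinvR_in_neq1 pi_sp pi_a).
Qed.
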